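(* Let $d\geq 2$ and let $\rho$ be a diagonal symmetric (DS) state acting on $\mathbb{C}^d\otimes\mathbb{C}^d$, with associated matrix $M(\rho)$. Then $\rho$ is PPT (i.e. its partial transpose $\rho^{T_B}$ is positive semidefinite) if and only if $M(\rho)$ is doubly non-negative.
   Context: Let $\{\ket{0},\dots,\ket{d-1}\}$ be the computational basis of $\mathbb{C}^d$. Define $\ket{D_{ii}}=\ket{ii}$ and, for $i<j$, $\ket{D_{ij}}=(\ket{ij}+\ket{ji})/\sqrt{2}$. A state $\rho$ on $\mathbb{C}^d\otimes\mathbb{C}^d$ is diagonal symmetric (DS) if $\rho=\sum_{0\le i\le j<d}p_{ij}\ket{D_{ij}}\bra{D_{ij}}$ with $p_{ij}\ge 0$ and $\sum_{i\le j}p_{ij}=1$; set $p_{ji}=p_{ij}$. Its associated matrix $M(\rho)$ is the real symmetric $d\times d$ matrix with $M(\rho)_{ii}=p_{ii}$ and $M(\rho)_{ij}=p_{ij}/2$ for $i\ne j$. The partial transpose $\rho^{T_B}$ is taken with respect to the computational basis of the second factor. A real symmetric matrix $A$ is doubly non-negative if $A\succeq 0$ and all its entries are non-negative. *)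

From HB Require Import structures.
From mathcomp Require Import all_boot all_order all_algebra.
From mathcomp Require Import complex.
Set Implicit Arguments. Unset Strict Implicit. Unset Printing Implicit Defensive.
Import Order.TTheory GRing.Theory Num.Theory.
Local Open Scope ring_scope.

(* Positive semidefinite complex matrix: Hermitian and v^* A v >= 0 for all v
   (in a numClosedFieldType, 0 <= z means z is real and nonnegative). *)
Definition psdC (C : numClosedFieldType) (n : nat) (A : 'M[C]_n) : Prop :=
  (map_mx Num.conj A)^T = A /\
  forall v : 'cV[C]_n, 0 <= ((map_mx Num.conj v)^T *m A *m v) 0 0.

Definition psdR (R : realFieldType) (n : nat) (A : 'M[R]_n) : Prop :=
  A^T = A /\ forall v : 'cV[R]_n, 0 <= (v^T *m A *m v) 0 0.

Definition doubly_nonneg (R : realFieldType) (n : nat) (A : 'M[R]_n) : Prop :=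
  psdR A /\ forall i j, 0 <= A i j.

Definition ket2 (C : nzRingType) (d : nat) (i j : 'I_d) : 'cV[C]_(d * d) :=
  delta_mx (mxvec_index i j) 0.

Definition Dket (R : rcfType) (d : nat) (i j : 'I_d) : 'cV[complex R]_(d * d) :=
  if i == j then ket2 _ i i
  else ((Num.sqrt (2 : R))^-1)%:C%C *: (ket2 _ i j + ket2 _ j i).

Definition DSstate (R : rcfType) (d : nat) (p : 'I_d -> 'I_d -> R)
  : 'M[complex R]_(d * d) :=
  \sum_(i < d) \sum_(j < d | (i <= j)%N)
     (p i j)%:C%C *: (@Dket R d i j *m (map_mx Num.conj (@Dket R d i j))^T).

(* Partial transpose on the second factor, w.r.t. the computational basis:
   <i l| A^{T_B} |k j> = <i j| A |k l>. *)
Definition ptB (C : nzRingType) (d : nat) (A : 'M[C]_(d * d)) : 'M[C]_(d * d) :=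
  \sum_(i < d) \sum_(j < d) \sum_(k < d) \sum_(l < d)
     A (mxvec_index i j) (mxvec_index k l) *:
       delta_mx (mxvec_index i l) (mxvec_index k j).

Definition Mmat (R : rcfType) (d : nat) (p : 'I_d -> 'I_d -> R) : 'M[R]_d :=
  \matrix_(i, j) (if i == j then p i i else p i j / 2).

From HB Require Import structures.
From mathcomp Require Import all_boot all_order all_algebra.
From mathcomp Require Import complex.
Import Order.TTheory GRing.Theory Num.Theory.
Local Open Scope ring_scope.

(* Partial transposition sends |D_ij><D_ij| to a combination of |ii><jj|,
   |jj><ii|, |ij><ij| and |ji><ji|.  Hence rho^{T_B} is the direct sum of
   M(rho), acting on span{|ii>}, and the diagonal matrix with entries M_ij
   on the vectors |ij>, i <> j.  So rho^{T_B} >= 0 iff M(rho) >= 0 and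
   M_ij >= 0 for i <> j; the latter holds for every DS state.  A real symmetric matrix is
   positive semidefinite on complex vectors as soon as it is on real ones:
   split the vector into its real and imaginary parts. *)

Lemma sum_upper_triangle (V : nmodType) n (f : 'I_n -> 'I_n -> V) :
  \sum_(i < n) \sum_(j < n | (i <= j)%N) (if i == j then f i i else f i j + f j i)
  = \sum_(i < n) \sum_(j < n) f i j.
Proof.
have diag_out (g : 'I_n -> V) (i : 'I_n) :
    \sum_(j < n | (i <= j)%N) g j = g i + \sum_(j < n | (i < j)%N) g j.
  rewrite (bigD1 i) //=; congr (_ + _); apply: eq_bigl => j.
  by rewrite ltn_neqAle andbC eq_sym.
have lower_up : \sum_(i < n) \sum_(j < n | (j < i)%N) f i j
              = \sum_(i < n) \sum_(j < n | (i < j)%N) f j i.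
  by rewrite (exchange_big_dep xpredT).
under [RHS]eq_bigr => i _ do rewrite (bigID (fun j : 'I_n => (i <= j)%N)) /=.
rewrite big_split /=.
under [X in _ = _ + X]eq_bigr do under eq_bigl do rewrite -ltnNge.
rewrite lower_up -big_split /=; apply: eq_bigr => i _.
rewrite diag_out eqxx diag_out -addrA -big_split /=; congr (_ + _).
by apply: eq_big => [j|j /ltn_eqF]; [|rewrite -[val i == val j]/(i == j) => ->].
Qed.

Lemma eq_mxvec_index m n (i k : 'I_m) (j l : 'I_n) :
  (mxvec_index i j == mxvec_index k l) = (i == k) && (j == l).
Proof.
by rewrite /mxvec_index (inj_eq (@cast_ord_inj _ _ _)) (inj_eq enum_rank_inj).
Qed.

Section PartialTranspose.
Variables (C : nzRingType) (d : nat).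
Local Notation mi := (@mxvec_index d d).

Lemma ptBE (A : 'M[C]_(d * d)) a b c e :
  ptB A (mi a b) (mi c e) = A (mi a e) (mi c b).
Proof.
rewrite /ptB summxE (big_only1 a) // => [|i /negPf nai _]; last first.
  rewrite summxE big1 // => j _; rewrite summxE big1 // => k _.
  rewrite summxE big1 // => l _.
  by rewrite !mxE !eq_mxvec_index eq_sym nai mulr0.
rewrite summxE (big_only1 e) // => [|j /negPf nje _]; last first.
  rewrite summxE big1 // => k _; rewrite summxE big1 // => l _.
  by rewrite !mxE !eq_mxvec_index [e == _]eq_sym nje !andbF mulr0.
rewrite summxE (big_only1 c) // => [|k /negPf nkc _]; last first.
  rewrite summxE big1 // => l _.
  by rewrite !mxE !eq_mxvec_index [c == _]eq_sym nkc /= !andbF mulr0.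
rewrite summxE (big_only1 b) // => [|l /negPf nlb _].
  by rewrite !mxE !eq_mxvec_index !eqxx mulr1.
by rewrite !mxE !eq_mxvec_index [b == _]eq_sym nlb /= !andbF mulr0.
Qed.

Lemma ptB_is_linear : linear (@ptB C d).
Proof.
move=> s A B; apply/matrixP => x y.
by case/mxvec_indexP: x => a b; case/mxvec_indexP: y => c e; rewrite !mxE !ptBE !mxE.
Qed.

HB.instance Definition _ :=
  GRing.isLinear.Build C 'M[C]_(d * d) 'M[C]_(d * d) _ (@ptB C d) ptB_is_linear.

Lemma ptB_delta i j k l :
  ptB (delta_mx (mi i j) (mi k l)) = delta_mx (mi i l) (mi k j) :> 'M[C]_(d * d).
Proof.
apply/matrixP => x y.
case/mxvec_indexP: x => a b; case/mxvec_indexP: y => c e.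
rewrite ptBE !mxE !eq_mxvec_index.
by case: (a == i); case: (e == j); case: (c == k); case: (b == l).
Qed.

End PartialTranspose.

Section HermitianForm.
Context {C : numClosedFieldType} {n : nat}.

Definition hform (w : 'cV[C]_n) (A : 'M[C]_n) : C :=
  ((map_mx Num.conj w)^T *m A *m w) 0 0.

Lemma hform_is_linear w : scalar (hform w).
Proof.
by move=> a A B; rewrite /hform mulmxDr mulmxDl -scalemxAr -scalemxAl !mxE.
Qed.

HB.instance Definition _ w :=
  GRing.isLinear.Build C 'M[C]_n C _ (hform w) (hform_is_linear w).

Lemma hformE w A :
  hform w A = \sum_i \sum_j Num.conj (w i 0) * A i j * w j 0.
Proof.
rewrite /hform mxE; under eq_bigr do rewrite mxE big_distrl.
rewrite exchange_big; apply: eq_bigr => i _; apply: eq_bigr => j _.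
by rewrite !mxE.
Qed.

Lemma hform_delta w x y : hform w (delta_mx x y) = Num.conj (w x 0) * w y 0.
Proof.
rewrite hformE (big_only1 x) // => [|i /negPf nix _]; last first.
  by rewrite big1 // => j _; rewrite mxE nix mulr0 mul0r.
rewrite (big_only1 y) // => [|j /negPf njy _]; first by rewrite mxE !eqxx mulr1.
by rewrite mxE eqxx njy mulr0 mul0r.
Qed.

Lemma conj_delta_mx m k (x : 'I_m) (y : 'I_k) :
  map_mx Num.conj (delta_mx x y : 'M[C]_(m, k)) = delta_mx x y.
Proof. by apply/matrixP => a b; rewrite !mxE rmorph_nat. Qed.

End HermitianForm.

Lemma ptB_adjoint (C : numClosedFieldType) d (A : 'M[C]_(d * d)) :
  (map_mx Num.conj (ptB A))^T = ptB ((map_mx Num.conj A)^T).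
Proof.
apply/matrixP => x y.
by case/mxvec_indexP: x => a b; case/mxvec_indexP: y => c e; rewrite !(mxE, ptBE).
Qed.

Section RealMatrices.
Variable R : rcfType.
Local Notation toC := (map_mx (real_complex R)).

(* [Num.conj] on [R[i]] is [conjc] only up to unfolding, so [conjc_real] does
   not rewrite it directly. *)
Lemma conj_real_complex (x : R) : Num.conj (x%:C)%C = (x%:C)%C.
Proof. exact: conjc_real. Qed.

Lemma conj_toC m n (A : 'M[R]_(m, n)) : map_mx Num.conj (toC A) = toC A.
Proof. by apply/matrixP => i j; rewrite !mxE conj_real_complex. Qed.

Lemma hform_toC_ReIm n (M : 'M[R]_n) (x y : 'cV[R]_n) : M^T = M ->
  hform (toC x + 'i%C *: toC y) (toC M) =
  ((x^T *m M *m x) 0 0 + (y^T *m M *m y) 0 0)%:C%C.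
Proof.
move=> symM.
have symyx : y^T *m M *m x = x^T *m M *m y.
  have tr11 (A : 'M[R]_1) : A^T = A by apply/matrixP => i j; rewrite mxE !ord1.
  by rewrite -[LHS]tr11 !trmx_mul trmxK symM mulmxA.
have conj_i : Num.conj 'i%C = - 'i%C :> R[i] by simpc.
rewrite /hform map_mxD map_mxZ !conj_toC /= conj_i scaleNr linearB linearZ /=.
rewrite !(mulmxDr, mulmxBl, mulmxDl) -!scalemxAl -!scalemxAr !map_trmx -!map_mxM.
rewrite symyx addrA subrK scalerA -expr2 sqr_i scaleN1r opprK -map_mxD.
by rewrite !mxE.
Qed.

Lemma hform_toC n (M : 'M[R]_n) (v : 'cV[R]_n) :
  hform (toC v) (toC M) = ((v^T *m M *m v) 0 0)%:C%C.
Proof. by rewrite /hform conj_toC map_trmx -!map_mxM mxE. Qed.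

Lemma hform_toC_ge0 n (M : 'M[R]_n) (z : 'cV[R[i]]_n) :
  psdR M -> 0 <= hform z (toC M).
Proof.
move=> [symM psdM].
have -> : z = toC (map_mx (@complex.Re R) z) + 'i%C *: toC (map_mx (@complex.Im R) z).
  by apply/matrixP => i j; rewrite !mxE -complexE.
by rewrite hform_toC_ReIm // ler0c addr_ge0.
Qed.

End RealMatrices.

Section DSstates.
Context {R : rcfType} {d : nat}.
Local Notation C := (complex R).
Local Notation mi := (@mxvec_index d d).
Local Notation dl x y := (delta_mx x y : 'M[C]_(d * d)).
Local Notation toC := (map_mx (real_complex R)).

Lemma conj_Dket i j : map_mx Num.conj (@Dket R d i j) = @Dket R d i j.
Proof.
rewrite /Dket /ket2; case: eqP => _; first exact: conj_delta_mx.
by rewrite map_mxZ map_mxD !conj_delta_mx /= conj_real_complex.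
Qed.

Lemma Dket_outer i j :
  @Dket R d i j *m (map_mx Num.conj (@Dket R d i j))^T =
  if i == j then dl (mi i i) (mi i i)
  else (2^-1)%:C%C *: (dl (mi i j) (mi i j) + dl (mi i j) (mi j i)
                       + dl (mi j i) (mi i j) + dl (mi j i) (mi j i)).
Proof.
rewrite conj_Dket /Dket /ket2; case: eqP => _; first by rewrite trmx_delta mul_delta_mx.
rewrite linearZ /= -scalemxAl -scalemxAr scalerA -rmorphM /= -invfM -expr2.
rewrite sqr_sqrtr ?ler0n // linearD /= mulmxDl !mulmxDr !trmx_delta !mul_delta_mx.
by rewrite !addrA.
Qed.

Lemma DSstate_adjoint (p : 'I_d -> 'I_d -> R) :
  (map_mx Num.conj (DSstate p))^T = DSstate p.
Proof.
rewrite /DSstate map_mx_sum linear_sum; apply: eq_bigr => i _.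
rewrite map_mx_sum linear_sum; apply: eq_bigr => j _.
rewrite map_mxZ linearZ /= conj_real_complex map_mxM -map_trmx !conj_Dket.
by rewrite trmx_mul trmxK.
Qed.

Context {p : 'I_d -> 'I_d -> R}.
Hypothesis hsym : forall i j, p j i = p i j.

Lemma Mmat_sym : (Mmat p)^T = Mmat p.
Proof.
by apply/matrixP => i j; rewrite !mxE eq_sym; case: eqP => [->|_] //; rewrite hsym.
Qed.

Lemma ptB_DSstate : ptB (DSstate p) =
  \sum_i \sum_j (Mmat p i j)%:C%C *:
    (dl (mi i i) (mi j j) + (if i == j then 0 else dl (mi i j) (mi i j))).
Proof.
rewrite /DSstate linear_sum; under eq_bigr do rewrite linear_sum.
rewrite -(@sum_upper_triangle _ _ (fun i j => (Mmat p i j)%:C%C *: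
    (dl (mi i i) (mi j j) + (if i == j then 0 else dl (mi i j) (mi i j))))).
apply: eq_bigr => i _; apply: eq_bigr => j _.
rewrite linearZ Dket_outer /= !mxE; case: eqVneq => [<-|nij].
  by rewrite !eqxx ptB_delta addr0.
rewrite hsym linearZ !linearD /= !ptB_delta scalerA -rmorphM /=.
by rewrite !scalerDr !addrA [X in X + _ + _ = _]addrC.
Qed.

Definition diag_coords (w : 'cV[C]_(d * d)) : 'cV[C]_d := \col_i w (mi i i) 0.

Lemma hform_ptB_DSstate w : hform w (ptB (DSstate p)) =
  hform (diag_coords w) (toC (Mmat p)) +
  \sum_i \sum_(j | i != j) (Mmat p i j)%:C%C * (Num.conj (w (mi i j) 0) * w (mi i j) 0).
Proof.
rewrite ptB_DSstate linear_sum; under eq_bigr do rewrite linear_sum.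
under eq_bigr do under eq_bigr do
  rewrite linearZ linearD /= (fun_if (hform w)) linear0 !hform_delta mulrDr.
under eq_bigr do rewrite big_split /=.
rewrite big_split /= hformE; congr (_ + _).
  apply: eq_bigr => i _; apply: eq_bigr => j _.
  by rewrite !mxE mulrCA mulrA.
apply: eq_bigr => i _; rewrite [RHS]big_mkcond; apply: eq_bigr => j _.
by case: eqP; rewrite ?mulr0.
Qed.

(* The vector \sum_i u_i |ii>. *)
Definition diag_ket (u : 'cV[C]_d) : 'cV[C]_(d * d) := (mxvec (diag_mx u^T))^T.

Lemma hform_ptB_DSstate_diag_ket u :
  hform (diag_ket u) (ptB (DSstate p)) = hform u (toC (Mmat p)).
Proof.
have diag_ketE i j : diag_ket u (mi i j) 0 = u i 0 *+ (i == j).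
  by rewrite mxE mxvecE !mxE.
rewrite hform_ptB_DSstate big1 ?addr0 => [|i _].
  by congr hform; apply/colP => i; rewrite mxE diag_ketE eqxx.
by rewrite big1 // => j /negPf nij; rewrite diag_ketE nij /= mulr0n !mulr0.
Qed.

Lemma Mmat_ge0 : (forall i j, 0 <= p i j) -> forall i j, 0 <= Mmat p i j.
Proof. by move=> p_ge0 i j; rewrite mxE; case: eqP => _; rewrite ?divr_ge0. Qed.

End DSstates.

Theorem theorem2 (R : rcfType) (d : nat) (p : 'I_d -> 'I_d -> R)
  (hd : (2 <= d)%N)
  (hsym : forall i j, p j i = p i j)
  (hnn : forall i j, 0 <= p i j)
  (hsum : \sum_(i < d) \sum_(j < d | (i <= j)%N) p i j = 1) :
  psdC (ptB (DSstate p)) <-> doubly_nonneg (Mmat p).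
Proof.
split=> [[_ psd_ptB] | [psdM _]].
  split; last exact: Mmat_ge0.
  split=> [|v]; first exact: Mmat_sym.
  rewrite -ler0c -hform_toC -(hform_ptB_DSstate_diag_ket hsym).
  exact: psd_ptB.
split=> [|w]; first by rewrite ptB_adjoint DSstate_adjoint.
rewrite -/(hform w _) (hform_ptB_DSstate hsym) addr_ge0 //.
  exact: hform_toC_ge0.
apply: sumr_ge0 => i _; apply: sumr_ge0 => j _.
by rewrite mulr_ge0 ?ler0c ?Mmat_ge0 // mulrC mul_conjC_ge0.
Qed.
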